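(* Let $Y$ be a continuous random variable supported on $[0,\infty)$ whose density $f$ satisfies $f(t)\le Ce^{-\lambda t}$ for all $t\ge0$, for some $C,\lambda>0$. For every $I>0$ there are constants $\eta,R>0$, depending only on $C,\lambda,I$, such that $\Re\,\mathbb{E}[e^{-sY}] \le 1-\eta$ for every complex $s$ with $\Re s\ge -R$ and $|\Im s|\ge I$. *)

From HB Require Import structures.
From mathcomp Require Import all_boot all_order all_algebra.
From mathcomp Require Import complex.
From mathcomp Require Import all_classical all_reals all_analysis.
Set Implicit Arguments. Unset Strict Implicit. Unset Printing Implicit Defensive.
Import Order.TTheory GRing.Theory Num.Theory ComplexField.
Local Open Scope ring_scope.
Local Open Scope classical_set_scope.

Definition cexp {R : realType} (z : R[i]) : R[i] :=
  ((expR (complex.Re z))%:C * (cos (complex.Im z) +i* sin (complex.Im z)))%C.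

(* Expectation E[g(Y)] of a complex-valued function g of a real random
   variable Y whose law has density f w.r.t. Lebesgue measure:
   E[g(Y)] = \int g f  (real and imaginary parts integrated separately). *)
Definition cexpect_density {R : realType} (f : R -> R) (g : R -> R[i]) : R[i] :=
  ((Rintegral lebesgue_measure setT (fun t => complex.Re (g t) * f t))
  +i* (Rintegral lebesgue_measure setT (fun t => complex.Im (g t) * f t)))%C.

Definition is_density_on_nonneg {R : realType} (f : R -> R) : Prop :=
  [/\ measurable_fun setT f,
      (forall t, 0 <= f t),
      (forall t, t < 0 -> f t = 0)
    & (\int[lebesgue_measure]_(t in setT) (f t)%:E = 1)%E].

From HB Require Import structures.
From mathcomp Require Import all_boot all_order all_algebra.
From mathcomp Require Import complex.
From mathcomp Require Import all_classical all_reals all_analysis.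
From mathcomp Require Import measurable_realfun ring lra.
Import Order.TTheory GRing.Theory Num.Theory ComplexField.
Local Open Scope ring_scope.

(* With [s = sig + i b], [Re E[e^(-sY)]] is the integral of
   [e^(-sig t) cos(b t) f(t)].  Since [cos(b t) <= cos th] unless [|b| t] lies
   within [th] of [2 k pi], the integrand is at most [cos th f(t)] except on
   these windows (where [f <= C]; inside [[0, T]] their total length is about
   [th (T + 3/|b|)]) and on the tail [t > T] (where
   [f(t) <= C e^(-l T/2) e^(-l t/2)]).  The damping [e^(-sig t) <= e^(R t)]
   costs at most [(4R/l) C e^(-l t/2)].  Taking [T] large, then [th] small,
   then [R] small, each error term is at most [(1 - cos th)/4], whence the
   bound [1 - (1 - cos th)/4]. *)

Lemma Re_cexpect_density_cexp (R : realType) (f : R -> R) (s : R[i]) :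
  complex.Re (cexpect_density f (fun t => cexp (- s * t%:C)%C)) =
  Rintegral lebesgue_measure setT
    (fun t => expR (- complex.Re s * t) * cos (complex.Im s * t) * f t).
Proof.
apply: eq_Rintegral => t _; case: s => a b.
by rewrite /cexp /= !mulr0 !mul0r subr0 add0r subr0 !mulNr cosN.
Qed.

Section integral_majorants.
Local Open Scope ereal_scope.

(* No integrability of [h] is needed: [\int h <= \int h^+ <= x], and when
   [\int h = -oo] the junk value [Rintegral mu D h = 0] is below [x >= 0]. *)
Lemma Rintegral_le_majorant d (T : measurableType d) (R : realType)
    (mu : {measure set T -> \bar R}) (D : set T) (h g : T -> R) (x : R) :
  measurable D -> measurable_fun D h -> measurable_fun D g ->
  (forall t, D t -> 0 <= g t)%R -> (forall t, D t -> h t <= g t)%R ->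
  \int[mu]_(t in D) (g t)%:E = x%:E -> (Rintegral mu D h <= x)%R.
Proof.
move=> mD mh mg g0 hg gx.
have pos_le : \int[mu]_(t in D) (EFin \o h)^\+ t <= x%:E.
  rewrite -gx; apply: ge0_le_integral => //.
  - by apply: measurable_funepos; exact/measurable_EFinP.
  - exact/measurable_EFinP.
  - by move=> t Dt; rewrite funeposE ge_max !lee_fin hg // g0.
have int_le : \int[mu]_(t in D) (h t)%:E <= x%:E.
  rewrite integralE; apply: le_trans pos_le; rewrite -[leRHS]adde0 leeD2l //.
  by rewrite oppe_le0; apply: integral_ge0 => t _; exact: funeneg_ge0.
rewrite /Rintegral; case: (\int[mu]_(t in D) _) int_le => [r||] //=.
by move=> _; rewrite -lee_fin; apply: le_trans pos_le; exact: integral_ge0.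
Qed.

Lemma integral_density_exponential_windows (R : realType) (f : R -> R)
    (a b c rate : R) (N : nat) (lo hi : nat -> R) :
  measurable_fun setT f -> (forall t, 0 <= f t)%R ->
  \int[lebesgue_measure]_(t in setT) (f t)%:E = 1 ->
  (0 <= a)%R -> (0 <= b)%R -> (0 <= c)%R -> (0 < rate)%R ->
  (forall k, lo k <= hi k)%R ->
  \int[lebesgue_measure]_(t in setT)
     (a * f t + b * exponential_pdf rate t
      + c * \sum_(k < N) \1_([set` `[lo k, hi k]%R]) t)%:E
  = (a + b + c * \sum_(k < N) (hi k - lo k))%:E.
Proof.
move=> mf f0 f1 a0 b0 c0 rate0 lohi.
have mpdf : measurable_fun setT (exponential_pdf rate).
  exact: measurable_exponential_pdf.
have pdf0 t : (0 <= exponential_pdf rate t)%R by apply/exponential_pdf_ge0/ltW.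
have mI k : measurable_fun setT (\1_([set` `[lo k, hi k]%R]) : R -> R).
  exact: measurable_indic.
under eq_integral do rewrite !EFinD !EFinM -sumEFin.
rewrite ge0_integralD //; last 4 first.
- by move=> t _; rewrite adde_ge0 // lee_fin mulr_ge0.
- apply: emeasurable_funD;
    by apply: emeasurable_funM => //; apply/measurable_EFinP.
- by move=> t _; rewrite mule_ge0 // sume_ge0 // => k _; rewrite lee_fin.
- apply: emeasurable_funM => //.
  by apply: emeasurable_sum => k; apply/measurable_EFinP.
rewrite ge0_integralD //; last 4 first.
- by move=> t _; rewrite lee_fin mulr_ge0.
- by apply: emeasurable_funM => //; apply/measurable_EFinP.
- by move=> t _; rewrite lee_fin mulr_ge0.
- by apply: emeasurable_funM => //; apply/measurable_EFinP.
rewrite !ge0_integralZl_EFin //; last 6 first.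
- by move=> t _; apply: sume_ge0 => k _; rewrite lee_fin.
- by apply: emeasurable_sum => k; apply/measurable_EFinP.
- by move=> t _; rewrite lee_fin.
- exact/measurable_EFinP.
- by move=> t _; rewrite lee_fin.
- exact/measurable_EFinP.
rewrite ge0_integral_sum //; last by move=> k; apply/measurable_EFinP.
rewrite f1 integral_exponential_pdf // !mule1.
rewrite (eq_bigr (fun k : 'I_N => (hi k - lo k)%:E)) => [|k _].
  by rewrite sumEFin -EFinM -!EFinD.
rewrite integral_indic // setIT.
have := lebesgue_measure_itv `[lo k, hi k]%R; rewrite /= => ->; rewrite lte_fin.
case: ltP => [_|hilo]; first by rewrite EFinB.
have -> : lo k = hi k by apply/eqP; rewrite eq_le lohi.
by rewrite subrr.
Qed.

End integral_majorants.

Section laplace_transform_bound.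
Set Implicit Arguments.
Unset Strict Implicit.
Variable R : realType.

Lemma cos_gt_near_2pi_multiple (x th : R) :
  0 <= x -> 0 < th <= pi -> cos th < cos x ->
  `|x - (Num.truncn ((x + pi) / (pi *+ 2)))%:R * (pi *+ 2)| < th.
Proof.
move=> x0 /andP[th0 thpi].
have pi2_gt0 : 0 < pi *+ 2 :> R by rewrite mulrn_wgt0 // pi_gt0.
set k := Num.truncn _; set y := x - _.
have /andP[kle ltk] :=
  truncn_itv (divr_ge0 (addr_ge0 x0 (pi_ge0 R)) (ltW pi2_gt0)).
rewrite -/k ler_pdivlMr // in kle; rewrite ltr_pdivrMr // in ltk.
have cos_y : cos x = cos y.
  rewrite -[in LHS](subrK (k%:R * (pi *+ 2)) x) -/y mulr_natl periodicn //.
  exact: cosD2pi.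
have y_le_pi : `|y| <= pi.
  move: kle ltk; rewrite ler_norml /y -natr1 mulrDl mul1r mulr2n => ? ?.
  apply/andP; split; lra.
rewrite cos_y -(cos_norm y) ltr_cos //.
  by rewrite in_itv /= normr_ge0 y_le_pi.
by rewrite in_itv /= (ltW th0) thpi.
Qed.

(* [peak_window tau th k] is the set of [t] with [|tau t - 2 k pi| <= th]; on
   [[0, T]] only the first [peak_count tau T] of them are met. *)
Definition peak_window (tau th : R) (k : nat) : set R :=
  [set` `[(k%:R * (pi *+ 2) - th) / tau, (k%:R * (pi *+ 2) + th) / tau]%R].

Definition peak_count (tau T : R) : nat :=
  (Num.truncn ((tau * T + pi) / (pi *+ 2))).+1.

Lemma sum_peak_windows_ge0 (tau th T t : R) :
  0 <= \sum_(k < peak_count tau T) (\1_(peak_window tau th k) t : R).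
Proof. by apply: sumr_ge0 => k _; rewrite indicE. Qed.

Lemma sum_peak_windows_ge1 (tau th T t : R) :
  0 < tau -> 0 < th <= pi -> 0 <= t <= T -> cos th < cos (tau * t) ->
  1 <= \sum_(k < peak_count tau T) (\1_(peak_window tau th k) t : R).
Proof.
move=> tau0 thpi /andP[t0 tT] cos_lt.
have taut0 : 0 <= tau * t by rewrite mulr_ge0 // ltW.
have near_k := cos_gt_near_2pi_multiple taut0 thpi cos_lt.
set k := Num.truncn _ in near_k.
have kN : (k < peak_count tau T)%N.
  rewrite ltnS le_truncn // ler_wpM2r ?lerD2r ?ler_pM2l //.
  by rewrite invr_ge0 mulrn_wge0 // pi_ge0.
rewrite (bigD1 (Ordinal kN)) //= indicE mem_set.
  by rewrite lerDl sumr_ge0 // => i _; rewrite indicE.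
rewrite /peak_window /= in_itv /= ler_pdivrMr // ler_pdivlMr //.
by move: near_k; rewrite ltr_norml => /andP[? ?]; apply/andP; split; lra.
Qed.

Lemma cos_mul_le_peak_windows (C l T th tau t y : R) :
  0 <= l -> 0 <= C -> 0 < th <= pi -> 0 < tau -> 0 <= t ->
  0 <= y -> y <= C * expR (- l * t) ->
  cos (tau * t) * y <= cos th * y + (1 - cos th) * C *
    (expR (- (l / 2) * T) * expR (- (l / 2) * t)
     + \sum_(k < peak_count tau T) (\1_(peak_window tau th k) t : R)).
Proof.
move=> l0 C0 thpi tau0 t0 y0 yC.
set E := expR _ * expR _; set S := \sum_(k < _) _.
have d0 : 0 <= 1 - cos th by rewrite subr_ge0 cos_le1.
have E0 : 0 <= E by rewrite mulr_ge0 ?expR_ge0.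
have S0 : 0 <= S := sum_peak_windows_ge0 tau th T t.
have dCES0 : 0 <= (1 - cos th) * C * (E + S).
  by rewrite mulr_ge0 ?addr_ge0 // mulr_ge0.
have cy_le_y : cos (tau * t) * y <= y by rewrite ler_piMl // cos_le1.
suff : y <= C * (E + S) \/ cos (tau * t) <= cos th.
  case=> [yCES | cos_le]; last by have := ler_wpM2r y0 cos_le; lra.
  by have := ler_wpM2l d0 yCES; lra.
have [tT|Tt] := leP t T; last first.
  left; apply: (le_trans yC); rewrite ler_wpM2l // /E -expRD.
  rewrite -[leLHS]addr0 lerD // ler_expR.
  by have := ler_wpM2l l0 (ltW Tt); lra.
have [cos_le|cos_gt] := leP (cos (tau * t)) (cos th); [by right | left].
have S1 : 1 <= S by apply: sum_peak_windows_ge1 => //; rewrite t0 tT.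
apply: (le_trans yC); rewrite ler_wpM2l //.
have : expR (- l * t) <= 1 by rewrite -expR0 ler_expR mulNr oppr_le0 mulr_ge0.
lra.
Qed.

(* [e^(rt) - 1 <= rt e^(rt)] and [rt <= (4r/l) e^(lt/4)]. *)
Lemma expR_sub1_mul_expR_le (l r t : R) : 0 < l -> 0 <= r <= l / 4 -> 0 <= t ->
  (expR (r * t) - 1) * expR (- l * t) <= 4 * r / l * expR (- (l / 2) * t).
Proof.
move=> l0 /andP[r0 rl] t0.
have k0 : 0 <= 4 * r / l by rewrite divr_ge0 ?mulr_ge0 // ltW.
have e1 : expR (r * t) - 1 <= r * t * expR (r * t).
  have := ler_wpM2r (expR_ge0 (r * t)) (expR_ge1Dx (- (r * t))).
  by rewrite -expRD addNr expR0 mulrDl mul1r mulNr; lra.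
have e2 : r * t <= 4 * r / l * expR (l / 4 * t).
  have -> : r * t = 4 * r / l * (l / 4 * t) by field; rewrite gt_eqF.
  by rewrite ler_wpM2l //; have := expR_ge1Dx (l / 4 * t); lra.
apply: (le_trans (ler_wpM2r (expR_ge0 _) e1)).
apply: (le_trans (ler_wpM2r (expR_ge0 _) (ler_wpM2r (expR_ge0 _) e2))).
rewrite -!mulrA -!expRD !mulrA ler_wpM2l // ler_expR.
have : (l / 4 + r - l) * t <= - (l / 2) * t by rewrite ler_wpM2r //; lra.
lra.
Qed.

Lemma expR_damping_le (C l Rr sig t z : R) :
  0 < l -> 0 <= Rr <= l / 4 -> - Rr <= sig -> 0 <= t ->
  0 <= z -> z <= C * expR (- l * t) ->
  expR (- sig * t) * z <= z + 4 * Rr / l * expR (- (l / 2) * t) * C.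
Proof.
move=> l0 Rrl sigRr t0 z0 zC; have /andP[Rr0 _] := Rrl.
have growth0 : 0 <= expR (Rr * t) - 1.
  by rewrite subr_ge0 -expR0 ler_expR mulr_ge0.
have : expR (- sig * t) * z <= expR (Rr * t) * z.
  by rewrite ler_wpM2r // ler_expR ler_wpM2r // lerNl.
have : (expR (Rr * t) - 1) * z <= (expR (Rr * t) - 1) * expR (- l * t) * C.
  by rewrite -mulrA ler_wpM2l // mulrC.
have C0 : 0 <= C by rewrite -(pmulr_lge0 _ (expR_gt0 (- l * t))) (le_trans z0).
have := ler_wpM2r C0 (expR_sub1_mul_expR_le l0 Rrl t0).
lra.
Qed.

(* The density of rate [l/2] absorbs both the tail of [f] beyond [T] and the
   error made by the damping factor. *)
Lemma laplace_integrand_le (C l T th Rr sig b t y : R) :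
  0 < l -> 0 <= C -> 0 < th <= pi -> 0 <= cos th -> 0 < `|b| ->
  0 <= Rr <= l / 4 -> - Rr <= sig ->
  0 <= y -> (0 <= t -> y <= C * expR (- l * t)) -> (t < 0 -> y = 0) ->
  expR (- sig * t) * cos (b * t) * y <=
    cos th * y
    + ((1 - cos th) * C * expR (- (l / 2) * T) + 4 * C * Rr / l) * (2 / l)
      * exponential_pdf (l / 2) t
    + (1 - cos th) * C
      * \sum_(k < peak_count `|b| T) (\1_(peak_window `|b| th k) t : R).
Proof.
move=> l0 C0 thpi cos_th0 b0 Rrl sigRr y0 yC yneg.
have /andP[Rr0 _] := Rrl.
have d0 : 0 <= 1 - cos th by rewrite subr_ge0 cos_le1.
have dCS0 : 0 <= (1 - cos th) * C
    * \sum_(k < peak_count `|b| T) (\1_(peak_window `|b| th k) t : R).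
  by rewrite !mulr_ge0 ?sum_peak_windows_ge0.
have K0 : 0 <= ((1 - cos th) * C * expR (- (l / 2) * T) + 4 * C * Rr / l)
               * (2 / l).
  by rewrite mulr_ge0 ?addr_ge0 ?divr_ge0 ?mulr_ge0 ?expR_ge0 // ltW.
have pdf0 : 0 <= exponential_pdf (l / 2) t.
  by rewrite exponential_pdf_ge0 // divr_ge0 // ltW.
have [t_lt0|t0] := ltP t 0.
  by rewrite yneg // !mulr0 add0r addr_ge0 // mulr_ge0.
rewrite -(cos_norm (b * t)) normrM (ger0_norm t0).
set c := cos (`|b| * t).
have [c_le0|c_gt0] := leP c 0.
  have : expR (- sig * t) * c * y <= 0.
    by rewrite -mulrA mulr_ge0_le0 ?expR_ge0 // mulr_le0_ge0.
  have : 0 <= cos th * y by rewrite mulr_ge0.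
  have := mulr_ge0 K0 pdf0; lra.
have cy_le : c * y <= C * expR (- l * t).
  by rewrite (le_trans _ (yC t0)) // ler_piMl // cos_le1.
rewrite exponential_pdfE //.
have := expR_damping_le l0 Rrl sigRr t0 (mulr_ge0 (ltW c_gt0) y0) cy_le.
have := cos_mul_le_peak_windows T (ltW l0) C0 thpi b0 t0 y0 (yC t0).
have -> : ((1 - cos th) * C * expR (- (l / 2) * T) + 4 * C * Rr / l) * (2 / l)
          * (l / 2 * expR (- (l / 2) * t))
        = (1 - cos th) * C * expR (- (l / 2) * T) * expR (- (l / 2) * t)
          + 4 * Rr / l * expR (- (l / 2) * t) * C.
  by field; rewrite gt_eqF.
rewrite -mulrA -/c; lra.
Qed.

Lemma Re_laplace_le (C l T th Rr : R) (f : R -> R) (s : R[i]) :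
  0 < l -> 0 <= C -> 0 < th <= pi -> 0 <= cos th -> 0 <= Rr <= l / 4 ->
  is_density_on_nonneg f -> (forall t, 0 <= t -> f t <= C * expR (- l * t)) ->
  - Rr <= complex.Re s -> 0 < `|complex.Im s| ->
  complex.Re (cexpect_density f (fun t => cexp (- s * t%:C)%C)) <=
    cos th
    + ((1 - cos th) * C * expR (- (l / 2) * T) + 4 * C * Rr / l) * (2 / l)
    + (1 - cos th) * C
      * ((peak_count `|complex.Im s| T)%:R * (2 * th / `|complex.Im s|)).
Proof.
move=> l0 C0 thpi cos_th0 Rrl [mf f0 fneg f1] fC sigRr b0.
rewrite Re_cexpect_density_cexp.
set sig := complex.Re s in sigRr *; set b := complex.Im s in b0 *.
set K := (_ + _) * (2 / l); set N := peak_count `|b| T.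
pose lo k := (k%:R * (pi *+ 2) - th) / `|b|.
pose hi k := (k%:R * (pi *+ 2) + th) / `|b|.
have d0 : 0 <= 1 - cos th by rewrite subr_ge0 cos_le1.
have /andP[th0 _] := thpi; have /andP[Rr0 _] := Rrl.
have K0 : 0 <= K.
  by rewrite mulr_ge0 ?addr_ge0 ?divr_ge0 ?mulr_ge0 ?expR_ge0 // ltW.
have lohi k : lo k <= hi k.
  by rewrite ler_wpM2r ?invr_ge0 //; lra.
have mK : measurable_fun setT (fun t => expR (- sig * t) * cos (b * t) * f t).
  apply: measurable_funM => //.
  apply: measurable_funM.
    apply: measurableT_comp; first exact: measurable_expR.
    exact: measurable_funM.
  apply: measurableT_comp => //.
  exact: continuous_measurable_fun (@continuous_cos R).
have pdf0 t : 0 <= exponential_pdf (l / 2) t.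
  by rewrite exponential_pdf_ge0 // divr_ge0 // ltW.
apply: (@Rintegral_le_majorant _ _ _ lebesgue_measure setT _
  (fun t => cos th * f t + K * exponential_pdf (l / 2) t
            + (1 - cos th) * C * \sum_(k < N) (\1_(peak_window `|b| th k) t : R))
  _ _ mK) => //.
- apply: measurable_funD; first apply: measurable_funD.
  + exact: measurable_funM.
  + apply: measurable_funM => //; exact: measurable_exponential_pdf.
  + apply: measurable_funM => //.
    apply: measurable_sum => k.
    by apply: measurable_indic; rewrite /peak_window; exact: measurable_itv.
- move=> t _; rewrite !addr_ge0 //; first exact: mulr_ge0.
    exact: mulr_ge0.
  by rewrite mulr_ge0 ?sum_peak_windows_ge0 // mulr_ge0.
- move=> t _; apply: laplace_integrand_le => //.
  + exact: fC.
  + exact: fneg.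
have dC0 : 0 <= (1 - cos th) * C by rewrite mulr_ge0.
have l2_gt0 : 0 < l / 2 by rewrite divr_gt0.
rewrite (@integral_density_exponential_windows R f (cos th) K ((1 - cos th) * C)
  (l / 2) N lo hi) //.
congr (_ + _ * _)%:E; rewrite (eq_bigr (fun=> 2 * th / `|b|)) => [|k _].
  by rewrite sumr_const cardT size_enum_ord [RHS]mulr_natl.
by rewrite /hi /lo -mulrBl; congr (_ * _); ring.
Qed.

Lemma peak_count_window_length_le (T th tau I : R) :
  0 <= T -> 0 <= th -> 0 < I <= tau ->
  (peak_count tau T)%:R * (2 * th / tau) <= th * (T + 3 / I).
Proof.
move=> T0 th0 /andP[I0 Itau]; have tau0 : 0 < tau := lt_le_trans I0 Itau.
have pi_gt0 : 0 < pi :> R := pi_gt0 R.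
have ratio0 : 0 <= (tau * T + pi) / (pi *+ 2).
  apply: divr_ge0; last exact: mulrn_wge0 (ltW pi_gt0).
  by rewrite addr_ge0 ?mulr_ge0 // ltW.
have N_le : (peak_count tau T)%:R <= (tau * T + pi) / (pi *+ 2) + 1.
  by rewrite -natr1 lerD2r truncn_le.
apply: (le_trans (ler_wpM2r _ N_le)).
  by rewrite divr_ge0 ?mulr_ge0 ?(ltW tau0).
have -> : ((tau * T + pi) / (pi *+ 2) + 1) * (2 * th / tau)
          = th * (T / pi + 3 / tau).
  by move: pi_gt0; set p := pi; clearbody p => p_gt0; field; rewrite !gt_eqF.
rewrite ler_wpM2l // lerD //.
  by rewrite ler_pdivrMr // ler_peMr //; have := @pi_ge2 R; lra.
by rewrite ler_wpM2l // lef_pV2 ?posrE.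
Qed.

Lemma tail_weight_le (C l : R) : 0 < l ->
  C * expR (- (l / 2) * (16 * C / l ^+ 2)) * (2 / l) <= 1 / 4.
Proof.
move=> l0; set x := 8 * C / l.
have -> : C * expR (- (l / 2) * (16 * C / l ^+ 2)) * (2 / l) = x / 4 / expR x.
  have -> : - (l / 2) * (16 * C / l ^+ 2) = - x.
    by rewrite /x; field; rewrite gt_eqF.
  by rewrite expRN /x; field; rewrite !gt_eqF ?expR_gt0.
rewrite ler_pdivrMr ?expR_gt0 //.
by have := expR_ge1Dx x; lra.
Qed.

Lemma Re_laplace_le_uniform (C l I th Rr : R) (f : R -> R) (s : R[i]) :
  0 < l -> 0 < C -> 0 < I -> 0 < th <= 1 ->
  4 * C * (th * (16 * C / l ^+ 2 + 3 / I)) <= 1 ->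
  0 <= Rr <= l / 4 -> Rr <= (1 - cos th) * l ^+ 2 / (32 * C) ->
  is_density_on_nonneg f -> (forall t, 0 <= t -> f t <= C * expR (- l * t)) ->
  - Rr <= complex.Re s -> I <= `|complex.Im s| ->
  complex.Re (cexpect_density f (fun t => cexp (- s * t%:C)%C)) <=
    1 - (1 - cos th) / 4.
Proof.
move=> l0 C0 I0 /andP[th0 th1] windows_le Rrl Rr_le f_dens fC sigRr I_le.
set T := 16 * C / l ^+ 2 in windows_le *.
have T0 : 0 <= T by rewrite divr_ge0 ?mulr_ge0 ?sqr_ge0 // ltW.
have th_pi : th <= pi by have := @pi_ge2 R; lra.
have cos_th0 : 0 <= cos th.
  by have := @pi_ge2 R => ?; apply: cos_ge0_pihalf; apply/andP; split; lra.
have b0 : 0 < `|complex.Im s| := lt_le_trans I0 I_le.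
have th_bounds : 0 < th <= pi by rewrite th0.
apply: le_trans
  (Re_laplace_le T l0 (ltW C0) th_bounds cos_th0 Rrl f_dens fC sigRr b0) _.
have tail := tail_weight_le C l0; rewrite -/T in tail.
have I_bounds : 0 < I <= `|complex.Im s| by rewrite I0.
have win := peak_count_window_length_le T0 (ltW th0) I_bounds.
have d0 : 0 <= 1 - cos th by rewrite subr_ge0 cos_le1.
have -> : ((1 - cos th) * C * expR (- (l / 2) * T) + 4 * C * Rr / l) * (2 / l)
          = (1 - cos th) * (C * expR (- (l / 2) * T) * (2 / l))
            + 8 * C * Rr / l ^+ 2.
  by field; rewrite gt_eqF.
have : 8 * C * Rr / l ^+ 2 <= (1 - cos th) / 4.
  rewrite ler_pdivrMr ?exprn_gt0 //.
  have -> : (1 - cos th) / 4 * l ^+ 2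
            = 8 * C * ((1 - cos th) * l ^+ 2 / (32 * C)) by field; rewrite gt_eqF.
  by rewrite ler_wpM2l // mulr_ge0 ?ler0n // ltW.
have := ler_wpM2l d0 tail.
have : (1 - cos th) * C
       * ((peak_count `|complex.Im s| T)%:R * (2 * th / `|complex.Im s|))
       <= (1 - cos th) * (1 / 4).
  by rewrite -mulrA ler_wpM2l // (le_trans (ler_wpM2l (ltW C0) win)) //; lra.
lra.
Qed.

End laplace_transform_bound.

Theorem lemma7 (R : realType) (C lambda I : R) :
  0 < C -> 0 < lambda -> 0 < I ->
  exists eta : R, exists Rr : R, 0 < eta /\ 0 < Rr /\
    forall f : R -> R,
      is_density_on_nonneg f ->
      (forall t, 0 <= t -> f t <= C * expR (- lambda * t)) ->
      forall s : R[i],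
        - Rr <= complex.Re s -> I <= `|complex.Im s| ->
        complex.Re (cexpect_density f (fun t => cexp (- s * t%:C)%C)) <= 1 - eta.
Proof.
move=> C0 l0 I0.
pose A := 4 * C * (16 * C / lambda ^+ 2 + 3 / I).
have A0 : 0 <= A.
  by rewrite mulr_ge0 ?addr_ge0 ?divr_ge0 ?mulr_ge0 ?sqr_ge0 ?ler0n
    ?(ltW C0) ?(ltW I0) ?(ltW l0).
pose th := (A + 1)^-1.
have th_bounds : 0 < th <= 1.
  have A1 : 0 < A + 1 by lra.
  by rewrite invr_gt0 invf_le1 // A1 lerDr.
have windows_le : 4 * C * (th * (16 * C / lambda ^+ 2 + 3 / I)) <= 1.
  by rewrite mulrCA -/A mulrC ler_pdivrMr; lra.
have cos_th_lt1 : cos th < 1.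
  have /andP[th0 th1] := th_bounds; have pi2 := @pi_ge2 R.
  rewrite -[ltRHS]cos0 ltr_cos ?in_itv /= ?lexx ?(ltW th0) //; lra.
pose Rr := Num.min (lambda / 4) ((1 - cos th) * lambda ^+ 2 / (32 * C)).
exists ((1 - cos th) / 4), Rr; split; first lra.
split; first by rewrite lt_min !divr_gt0 ?mulr_gt0 ?exprn_gt0 ?subr_gt0 ?ltr0n.
move=> f f_dens fC s sigRr I_le.
apply: (Re_laplace_le_uniform (Rr := Rr) l0 C0 I0 th_bounds windows_le) => //.
- apply/andP; split; last by rewrite ge_min lexx.
  by rewrite le_min !divr_ge0 ?mulr_ge0 ?subr_ge0 ?cos_le1 ?sqr_ge0 ?ler0n
    ?(ltW l0) ?(ltW C0).
- by rewrite ge_min lexx orbT.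
Qed.
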